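(* Let $k\ge 4$ be an integer, let $m$ be an integer with $$m\ge \min\left\{\left\lceil \frac{(k+2)(k-3)}{2k}\right\rceil,\ \left\lceil \sqrt{2k+\tfrac14}-\tfrac32\right\rceil\right\}-1,$$ and let $D\ge m2^{k-1}$ be a positive integer divisible by $4$. Then there exists a binary self-orthogonal $[N,k,D]$ Griesmer code, where $N=\sum_{i=0}^{k-1}\lceil D/2^i\rceil$.
   Context: A binary code is self-orthogonal if $C\subseteq C^\perp$. A binary $[N,k,D]$ code is a Griesmer code if $N=\sum_{i=0}^{k-1}\lceil D/2^i\rceil$. *)

From HB Require Import structures.
From mathcomp Require Import all_boot all_order all_algebra.
From mathcomp Require Import reals.
Set Implicit Arguments. Unset Strict Implicit. Unset Printing Implicit Defensive.
Import Order.TTheory GRing.Theory Num.Theory.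
Local Open Scope ring_scope.

(* A binary linear code of length N is represented by a square matrix C whose
   row space (mxalgebra) is the code; codewords are the v with (v <= C)%MS. *)

Definition hwt N (v : 'rV['F_2]_N) : nat := #|[set i : 'I_N | v 0 i != 0]|.

Definition is_binary_code N k D (C : 'M['F_2]_N) : Prop :=
  \rank C = k /\
  (exists2 v : 'rV['F_2]_N, (v <= C)%MS & (v != 0) && (hwt v == D)%N) /\
  (forall v : 'rV['F_2]_N, (v <= C)%MS -> v != 0 -> (D <= hwt v)%N).

Definition dotF2 N (u v : 'rV['F_2]_N) : 'F_2 := \sum_(i < N) u 0 i * v 0 i.

Definition in_dual N (C : 'M['F_2]_N) (u : 'rV['F_2]_N) : Prop :=
  forall v : 'rV['F_2]_N, (v <= C)%MS -> dotF2 u v = 0.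

Definition self_orthogonal N (C : 'M['F_2]_N) : Prop :=
  forall u : 'rV['F_2]_N, (u <= C)%MS -> in_dual C u.

Definition ceil_div (a b : nat) : nat := ((a + b - 1) %/ b)%N.

Definition griesmer_length (k D : nat) : nat := \sum_(i < k) ceil_div D (2 ^ i)%N.

(* Write D = s 2^(k-1) - d with 0 <= d < 2^(k-1).  As 4 divides D, it divides d, so the
   binary digits j of d lie in [2, k-2].  Take s copies of every nonzero column of F_2^k
   (s copies of the simplex code) and remove, for each binary digit j of d, the nonzero
   vectors of a (j+1)-dimensional subspace U_j, namely the multiples of an irreducible
   polynomial G_j of degree k-1-j among the polynomials of degree < k.  Distinct G_j are
   coprime, so a nonzero vector lies in more than s of the U_j only if the degrees k-1-j
   of more than s of them add up to at least k, which the hypothesis on m excludes; hence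
   the removal is possible.  The length is then s (2^k - 1) - sum_j (2^(j+1) - 1), the
   Griesmer length, and the message x has weight s 2^(k-1) - sum 2^j over the U_j not
   orthogonal to x.  So every weight is at least D and divisible by 4 (as j >= 2), the
   message e_(k-1) has weight exactly D, and a doubly-even binary code is
   self-orthogonal. *)

From HB Require Import structures.
From mathcomp Require Import all_boot all_order all_algebra.
From mathcomp Require Import reals.
From mathcomp Require Import fingroup cyclic finalg vector falgebra fieldext finfield.
From mathcomp Require Import zify lra.
Import Order.TTheory GRing.Theory Num.Theory.
Set Implicit Arguments. Unset Strict Implicit. Unset Printing Implicit Defensive.

Local Open Scope nat_scope.

(** * Binary digits and the Griesmer length *)

Definition bitn (d j : nat) : bool := odd (d %/ 2 ^ j).

Lemma bitn_half d j : bitn d j.+1 = bitn d./2 j.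
Proof. by rewrite /bitn expnS divnMA divn2. Qed.

Lemma bitn_small d j : d < 2 ^ j -> bitn d j = false.
Proof. by move=> dj; rewrite /bitn divn_small. Qed.

Lemma bitn_dvdn d i j : 2 ^ i %| d -> j < i -> bitn d j = false.
Proof.
move=> /dvdnP[q ->] ji; rewrite /bitn -(subnK (ltnW ji)) expnD mulnA mulnK ?expn_gt0 //.
by rewrite oddM oddX subn_eq0 orbF leqNgt ji andbF.
Qed.

Lemma bitn_mid k d j : 4 %| d -> d < 2 ^ k.-1 -> bitn d j -> 2 <= j <= k - 2.
Proof.
move=> d4 dk dj; apply/andP; split; rewrite leqNgt; apply: contraL dj => jk.
  by rewrite (bitn_dvdn (d4 : 2 ^ 2 %| d)).
by rewrite bitn_small // (leq_trans dk) // leq_exp2l //; lia.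
Qed.

Lemma sum_bitn k d : d < 2 ^ k -> \sum_(j < k) bitn d j * 2 ^ j = d.
Proof.
elim: k d => [|k IH] d dlt; first by rewrite big_ord0; case: d dlt.
rewrite big_ord_recl; under eq_bigr do rewrite lift0 bitn_half expnS mulnCA.
rewrite -big_distrr /= IH; last by rewrite -divn2 ltn_divLR // -expnSr.
by rewrite /bitn expn0 divn1 muln1 mul2n -[RHS]odd_double_half.
Qed.

Lemma sum_divn_exp2 k d : d < 2 ^ k ->
  \sum_(i < k) d %/ 2 ^ i + \sum_(j < k) bitn d j = d.*2.
Proof.
elim: k d => [|k IH] d dlt; first by rewrite !big_ord0; case: d dlt.
rewrite !big_ord_recl.
under eq_bigr do rewrite lift0 expnS divnMA divn2.
under [X in _ + (_ + X)]eq_bigr do rewrite lift0 bitn_half.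
have := IH d./2; rewrite -divn2 ltn_divLR // -expnSr => /(_ dlt); rewrite divn2.
rewrite /bitn expn0 !divn1.
by have := odd_double_half d; case: (odd d) => /=; lia.
Qed.

Lemma sum_exp2 k : (\sum_(i < k) 2 ^ i).+1 = 2 ^ k.
Proof. by elim: k => [|k IH]; rewrite ?big_ord0 // big_ord_recr /= -addSn IH expnS; lia. Qed.

Lemma ceil_div_mulB S P d : 0 < P -> d < S * P ->
  ceil_div (S * P - d) P + d %/ P = S.
Proof.
move=> P0 dlt; rewrite /ceil_div.
have := divn_eq d P; have := ltn_pmod d P0.
set q := d %/ P; set r := d %% P => rlt Ed.
have qS : q < S by rewrite -(ltn_pmul2r P0); lia.
have -> : S * P - d + P - 1 = (S - q) * P + (P - 1 - r) by rewrite mulnBl; nia.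
by rewrite divnMDl // divn_small; lia.
Qed.

Lemma ceil_divP D P : 0 < P -> D <= ceil_div D P * P < D + P.
Proof.
move=> P0; rewrite /ceil_div; have := divn_eq (D + P - 1) P; have := ltn_pmod (D + P - 1) P0.
by move: (_ %/ P) (_ %% P) => q r; nia.
Qed.

Lemma griesmer_length_anticode k s d : 0 < k -> d < s * 2 ^ k.-1 -> d < 2 ^ k ->
  griesmer_length k (s * 2 ^ k.-1 - d) + \sum_(j < k) bitn d j * 2 ^ j.+1
  = s * (2 ^ k).-1 + \sum_(j < k) bitn d j.
Proof.
move=> k0 dlt dk.
have E1 : griesmer_length k (s * 2 ^ k.-1 - d) + \sum_(i < k) d %/ 2 ^ i
          = s * (2 ^ k).-1.
  rewrite /griesmer_length -big_split /=.
  rewrite (eq_bigr (fun i : 'I_k => s * 2 ^ (k.-1 - i))); last first.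
    move=> i _; have Ei : s * 2 ^ k.-1 = s * 2 ^ (k.-1 - i) * 2 ^ i.
      by rewrite -mulnA -expnD subnK // -ltnS prednK.
    by rewrite Ei ceil_div_mulB ?expn_gt0 // -Ei.
  rewrite -big_distrr /= -sum_exp2 /= (reindex_inj rev_ord_inj) /=.
  by congr (_ * _); apply: eq_bigr => i _; congr (_ ^ _); have := ltn_ord i; lia.
have E2 : \sum_(j < k) bitn d j * 2 ^ j.+1 = d.*2.
  by under eq_bigr do rewrite expnS mulnCA; rewrite -big_distrr /= sum_bitn // mul2n.
by rewrite E2 -(sum_divn_exp2 dk); lia.
Qed.

(** * How many copies of the simplex code suffice *)

Lemma sum_pred_leq n (P : pred nat) : \sum_(i < n) P i <= n.
Proof.
apply: leq_trans (_ : \sum_(i < n) 1 <= n); last by rewrite sum1_card card_ord.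
by apply: leq_sum => i _; apply: leq_b1.
Qed.

Lemma triangular_leq_sum_pred n (P : pred nat) :
  (\sum_(i < n) P i) * (\sum_(i < n) P i).+1 <= 2 * \sum_(i < n) P i * (n - i).
Proof.
elim: n P => [|n IH] P; first by rewrite !big_ord0.
rewrite !big_ord_recl; under eq_bigr do rewrite lift0.
under [X in _ <= 2 * (_ + X)]eq_bigr do rewrite lift0 subSS.
have := IH (fun i => P i.+1); have := sum_pred_leq n (fun i => P i.+1).
by case: (P 0) => /=; nia.
Qed.

Lemma sum_mid_succ k : 4 <= k ->
  2 * \sum_(j < k) (2 <= j <= k - 2) * j.+1 = (k + 2) * (k - 3).
Proof.
case: k => [|[|[|[|n]]]] // _.
rewrite -(big_mkord xpredT (fun j => (2 <= j <= n.+4 - 2) * j.+1)).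
rewrite big_ltn // big_ltn // big_nat_recr //= subn2 /= ltnn !mul0n !add0n addn0.
rewrite (@eq_big_nat _ _ _ 2 n.+3 _ succn) => [|j /andP[-> jn]]; last first.
  by rewrite (_ : j <= n.+2) //; lia.
elim: n => [|n IH]; first by rewrite big_nat1.
by rewrite big_nat_recr //= mulnDr IH; lia.
Qed.

Definition copies_suffice (k s : nat) : Prop :=
  (k + 2) * (k - 3) <= 2 * k * s \/ 2 * k <= (s + 1) * (s + 2).

Lemma copies_suffice_codim_sum k s (P : pred nat) :
  4 <= k -> copies_suffice k s -> (forall j, j < k -> P j -> 2 <= j <= k - 2) ->
  s < \sum_(j < k) P j -> k <= \sum_(j < k) P j * (k.-1 - j).
Proof.
move=> k4 [HA|HB] HP Hs.
- (* sum_(j in P) (k-1-j) = |P| k - sum_(j in P) (j+1) >= (s+1) k - (k+2)(k-3)/2 *)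
  have E : \sum_(j < k) P j * (k.-1 - j) + \sum_(j < k) P j * j.+1
           = (\sum_(j < k) P j) * k.
    rewrite -big_split big_distrl /=; apply: eq_bigr => j _.
    by have := ltn_ord j; case: (P j) => /=; lia.
  have T : \sum_(j < k) P j * j.+1 <= \sum_(j < k) (2 <= j <= k - 2) * j.+1.
    apply: leq_sum => j _; have := HP j (ltn_ord j).
    by case: (P j) => //= /(_ isT) ->.
  have W := sum_mid_succ k4.
  have Hak : s.+1 * k <= (\sum_(j < k) P j) * k by rewrite leq_mul2r Hs orbT.
  move: E T W Hak HA.
  set S := \sum_(j < k) P j * _; set T := \sum_(j < k) P j * _.
  set W := \sum_(j < k) _ * _; set a := \sum_(j < k) P j.
  nia.
- (* the k-1-j for j in P are |P| distinct positive integers *)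
  case: k k4 HP HB Hs => [|k] // k4 HP HB Hs.
  have Pk : P k = false by apply/negP => /(HP _ (ltnSn k)); lia.
  rewrite big_ord_recr /= Pk addn0 in Hs *.
  rewrite big_ord_recr /= Pk /= addn0.
  have := triangular_leq_sum_pred k P; move: Hs.
  set a := \sum_(i < k) P i; set S := \sum_(i < k) P i * _ => Hs.
  have : (s + 1) * (s + 2) <= a * a.+1 by apply: leq_mul; lia.
  lia.
Qed.

Local Open Scope ring_scope.

Lemma copies_suffice_of_ceil (R : realType) (k : nat) (m : int) (s : nat) :
  (4 <= k)%N ->
  Num.min (Num.ceil (((k%:R + 2) * (k%:R - 3)) / (2 * k%:R) : R))
          (Num.ceil (Num.sqrt (2 * k%:R + 1 / 4) - 3 / 2 : R)) - 1 <= m ->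
  m < s%:Z -> copies_suffice k s.
Proof.
move=> k4 Hm ms; have k0 : (0 : R) < k%:R by rewrite ltr0n; lia.
have {Hm ms} : Num.min (Num.ceil (((k%:R + 2) * (k%:R - 3)) / (2 * k%:R) : R))
      (Num.ceil (Num.sqrt (2 * k%:R + 1 / 4) - 3 / 2 : R)) <= s%:Z.
  by rewrite -(lerD2r (-1)); apply: le_trans Hm _; rewrite -ltzD1 addrNK.
rewrite ge_min => /orP[] /=; rewrite ceil_le_int => H; [left|right].
- rewrite -(ler_nat R) !natrM natrB ?natrD; last lia.
  by move: H; rewrite ler_pdivrMr ?mulr_gt0 // pmulrn => H; lra.
- have x0 : (0 : R) <= 2 * k%:R + 1 / 4 by lra.
  have := sqr_sqrtr x0; have := sqrtr_ge0 (2 * k%:R + 1 / 4 : R).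
  have s0 : (0 : R) <= s%:R by rewrite ler0n.
  move: H; rewrite lerBlDr pmulrn -(ler_nat R) !natrM !natrD.
  set a := Num.sqrt _; set b : R := s%:R => *; nra.
Qed.

Lemma F2_cases (x : 'F_2) : x = 0 \/ x = 1.
Proof. by case: x => [[|[|i]] Hi]; [left|right|]; try apply: val_inj. Qed.

Lemma F2_neq0 (x : 'F_2) : (x != 0) = (x == 1).
Proof. by case: (F2_cases x) => ->. Qed.

Lemma card_F2_neq0 (V : finZmodType) (f : V -> 'F_2) (v0 : V) :
  {morph f : a b / a + b} -> f v0 != 0 -> #|[set v | f v != 0]|.*2 = #|V|.
Proof.
move=> fD fv0; have {}fv0 : f v0 = 1 by apply/eqP; rewrite -F2_neq0.
have shift : [set v | f v == 0] = [set v + v0 | v in [set v | f v != 0]].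
  apply/setP => v; rewrite inE; apply/eqP/imsetP => [fv|[u]].
  - exists (v - v0); last by rewrite addrNK.
    have : f v = f (v - v0) + 1 by rewrite -fv0 -fD addrNK.
    by rewrite inE fv; case: (F2_cases (f (v - v0))) => ->.
  - by rewrite inE F2_neq0 => /eqP fu ->; rewrite fD fu fv0; apply: val_inj.
have := cardsC [set v | f v != 0].
have -> : ~: [set v | f v != 0] = [set v | f v == 0] by apply/setP => v; rewrite !inE negbK.
by rewrite shift card_imset ?addnn //; apply: addIr.
Qed.

Lemma delta_mx_neq0 (R : nzRingType) m n (i : 'I_m) (j : 'I_n) :
  delta_mx i j != 0 :> 'M[R]_(m, n).
Proof. by apply/eqP => /matrixP/(_ i j)/eqP; rewrite !mxE !eqxx oner_eq0. Qed.

Lemma dotF2C n (u v : 'rV['F_2]_n) : dotF2 u v = dotF2 v u.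
Proof. by apply: eq_bigr => i _; rewrite mulrC. Qed.

Lemma dotF2D n (x u v : 'rV['F_2]_n) : dotF2 x (u + v) = dotF2 x u + dotF2 x v.
Proof. by rewrite /dotF2 -big_split; apply: eq_bigr => i _; rewrite mxE mulrDr. Qed.

Lemma dotF2r0 n (x : 'rV['F_2]_n) : dotF2 x 0 = 0.
Proof. by rewrite /dotF2 big1 // => i _; rewrite mxE mulr0. Qed.

Lemma dotF2_deltal n (i : 'I_n) (w : 'rV['F_2]_n) : dotF2 (delta_mx 0 i) w = w 0 i.
Proof.
rewrite /dotF2 (bigD1 i) //= big1 ?addr0 => [|j /negPf ji]; first by rewrite mxE !eqxx mul1r.
by rewrite mxE ji andbF mul0r.
Qed.

Lemma card_dotF2_neq0 n (x : 'rV['F_2]_n) :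
  x != 0 -> #|[set v | dotF2 x v != 0]| = (2 ^ n.-1)%N.
Proof.
move=> x0; have [i xi] : exists i, x 0 i != 0.
  apply/existsP; apply: contraR x0 => /existsPn x0; apply/eqP/rowP => i.
  by rewrite mxE; apply/eqP; rewrite -[_ == _]negbK x0.
have := @card_F2_neq0 _ (dotF2 x) (delta_mx 0 i) (dotF2D x).
rewrite dotF2C dotF2_deltal card_mx card_Fp // mul1n => /(_ xi).
by move=> E; apply: double_inj; rewrite E -mul2n -expnS prednK // (leq_ltn_trans _ (ltn_ord i)).
Qed.

Lemma hwtE N (w : 'rV['F_2]_N) : hwt w = (\sum_(i < N) (w 0%R i != 0%R))%N.
Proof. by rewrite /hwt -sum1_card big_mkcond; apply: eq_bigr => i _; rewrite inE. Qed.

Lemma dotF2E N (u v : 'rV['F_2]_N) :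
  dotF2 u v = (\sum_(i < N) ((u 0%R i != 0%R) && (v 0%R i != 0%R)))%:R.
Proof.
rewrite natr_sum; apply: eq_bigr => i _.
by case: (F2_cases (u 0 i)) => ->; case: (F2_cases (v 0 i)) => ->; apply: val_inj.
Qed.

Lemma hwtD N (u v : 'rV['F_2]_N) :
  (hwt (u + v) + 2 * \sum_(i < N) ((u 0%R i != 0%R) && (v 0%R i != 0%R)) = hwt u + hwt v)%N.
Proof.
rewrite !hwtE big_distrr -!big_split; apply: eq_bigr => i _; rewrite mxE.
by case: (F2_cases (u 0 i)) => ->; case: (F2_cases (v 0 i)) => ->.
Qed.

Lemma self_orthogonal_doubly_even N (C : 'M['F_2]_N) :
  (forall v : 'rV_N, (v <= C)%MS -> (4 %| hwt v)%N) -> self_orthogonal C.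
Proof.
move=> C4 u uC v vC; rewrite dotF2E -(Fp_nat_mod (isT : prime 2)).
have := hwtD u v; set t := (\sum_(i < N) _)%N; clearbody t => E.
suff -> : (t %% 2 = 0)%N by [].
move: E (C4 _ uC) (C4 _ vC) (C4 _ (addmx_sub uC vC)).
by move: (hwt u) (hwt v) (hwt (u + v)) => a b c; lia.
Qed.

Section CodeOfColumns.

Variables (k N D : nat) (cs : seq 'rV['F_2]_k).
Hypotheses (size_cs : size cs = N) (D_gt0 : (0 < D)%N).

Definition cols_wt (x : 'rV['F_2]_k) : nat := count (fun c => dotF2 x c != 0) cs.

Definition gen_mx : 'M['F_2]_(k, N) := \matrix_(i, j) cs`_j 0 i.

Lemma hwt_gen_mx x : hwt (x *m gen_mx) = cols_wt x.
Proof.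
rewrite hwtE /cols_wt -sum1_count (big_nth 0) big_mkord size_cs [RHS]big_mkcond /=.
apply: eq_bigr => j _; rewrite !mxE (_ : \sum_i _ = dotF2 x cs`_j); last first.
  by apply: eq_bigr => i _; rewrite mxE.
by case: (dotF2 x cs`_j != 0).
Qed.

Hypotheses (wt_min : forall x, x != 0 -> (D <= cols_wt x)%N)
           (wt_doubly_even : forall x, x != 0 -> (4 %| cols_wt x)%N)
           (wt_attained : exists2 x, x != 0 & cols_wt x = D).

Lemma row_free_gen_mx : row_free gen_mx.
Proof.
apply: inj_row_free => x Hx; apply/eqP; apply: contraT => x0.
have := wt_min x0; rewrite -hwt_gen_mx Hx hwtE big1 ?leqn0 => [|i _]; last by rewrite mxE.
by case: D D_gt0.
Qed.

Lemma mul_gen_mx_eq0 (x : 'rV_k) : (x *m gen_mx == 0) = (x == 0).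
Proof. by rewrite -(mul0mx 1 gen_mx) (inj_eq (@row_free_inj _ 1 _ _ _ row_free_gen_mx)). Qed.

Lemma self_orthogonal_code_of_columns :
  exists C : 'M['F_2]_N, is_binary_code k D C /\ self_orthogonal C.
Proof.
pose C := (pid_mx k : 'M_(N, k)) *m gen_mx.
have kN : (k <= N)%N by rewrite -(eqnP row_free_gen_mx) rank_leq_col.
have EC : (C :=: gen_mx)%MS by apply/eqmxMfull; rewrite /row_full rank_pid_mx.
have inC v : (v <= C)%MS -> exists x, v = x *m gen_mx by rewrite EC => /submxP.
have wt0 : cols_wt 0 = 0%N.
  by apply/eqP; rewrite -leqn0 -(hwt_gen_mx 0) mul0mx hwtE big1 // => i _; rewrite mxE.
exists C; split; first split; first by rewrite EC; apply/eqP/row_free_gen_mx.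
- split.
  + have [x x0 wtx] := wt_attained; exists (x *m gen_mx); first by rewrite EC submxMl.
    by rewrite hwt_gen_mx wtx mul_gen_mx_eq0 x0 eqxx.
  + by move=> v /inC[x ->]; rewrite mul_gen_mx_eq0 hwt_gen_mx; apply: wt_min.
- apply: self_orthogonal_doubly_even => v /inC[x ->]; rewrite hwt_gen_mx.
  by have [->|/wt_doubly_even//] := eqVneq x 0; rewrite wt0.
Qed.

End CodeOfColumns.

(** * Subspaces of multiples of a polynomial *)

Section PolyDivisibility.

Variable R : fieldType.
Implicit Types g h p : {poly R}.

Lemma irredp_coprimep g h :
  irreducible_poly g -> irreducible_poly h -> size g != size h -> coprimep g h.
Proof.
move=> [sg Ig] [_ Ih] neq; rewrite coprimep_def; apply: contraNT neq => gcd1.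
have /eqp_dvdl gh := Ig _ gcd1 (dvdp_gcdl g h).
by rewrite -(eqp_size (Ih _ (negbT (gtn_eqF sg)) _)) // -gh dvdp_gcdr.
Qed.

Lemma dvdp_prod_coprime (I : eqType) (F : I -> {poly R}) (r : seq I) p :
  uniq r -> (forall i, i \in r -> F i %| p) ->
  {in r &, forall i j, i != j -> coprimep (F i) (F j)} ->
  \prod_(i <- r) F i %| p.
Proof.
elim: r => [|a r IH] /=; first by rewrite big_nil dvd1p.
case/andP => ar ur Fp Fcop; rewrite big_cons Gauss_dvdp ?Fp ?mem_head //=.
  apply: IH ur _ _ => [i ir|i j ir jr]; first by rewrite Fp // inE ir orbT.
  by apply: Fcop; rewrite inE ?ir ?jr orbT.
rewrite big_seq; apply: (big_ind (coprimep (F a))) => [|q1 q2|i ir].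
- exact: coprimep1.
- by rewrite coprimepMr => -> ->.
- by apply: Fcop; rewrite ?mem_head ?inE ?ir ?orbT //; apply: contraNneq ar => ->.
Qed.

End PolyDivisibility.

Lemma exists_irreducible_poly (p n : nat) : prime p -> (0 < n)%N ->
  exists g : {poly 'F_p}, [/\ irreducible_poly g, g \is monic & size g = n.+1].
Proof.
move=> p_pr n0.
have [Fm chF cardF] := pPrimePowerField p_pr n0.
pose L := pPrimeCharType chF.
have dimL : \dim {: L : vectType 'F_p} = n.
  by rewrite pprimeChar_dimf cardF pfactorK.
(* the minimal polynomial of a generator of the cyclic unit group of F_(p^n) has degree n *)
have [u defU] := cyclicP (field_unit_group_cyclic [set: {unit L}]%G).
pose z : L := val u.
have full : (<<1; z>> = fullv)%VS.
  apply/eqP; rewrite eqEsubv subvf /=; apply/subvP => y _.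
  have [->|y0] := eqVneq y 0; first exact: mem0v.
  have y0' : y \is a GRing.unit by rewrite unitfE.
  have : FinRing.unit L y0' \in <[u]>%g by rewrite -defU inE.
  case/cycleP => i Ei; have -> : y = val (FinRing.unit L y0') by [].
  rewrite Ei; have -> : val (u ^+ i)%g = z ^+ i.
    by elim: i {Ei} => // i IH; rewrite expgSr /= IH exprSr.
  exact/rpredX/memv_adjoin.
have [q Dq] := polyOver1P (minPolyOver 1 z).
have szq : size q = n.+1.
  by rewrite -(size_map_poly (in_alg L)) -Dq size_minPoly adjoin_degreeE full dimv1 divn1 dimL.
have mq : q \is monic.
  have := monic_minPoly 1 z; rewrite Dq !monicE lead_coef_map.
  by move/eqP; rewrite -(rmorph1 (in_alg L)) => /fmorph_inj ->.
exists q; split => //; split => [|r szr rq]; first by rewrite szq.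
have Hr : map_poly (in_alg L) r \is a polyOver 1%VS by apply/polyOver1P; exists r.
have Hd : map_poly (in_alg L) r %| minPoly 1 z by rewrite Dq dvdp_map.
case/orP: (minPoly_irr Hr Hd); first by rewrite Dq eqp_map.
by rewrite -size_poly_eq1 size_map_poly (negPf szr).
Qed.

Lemma irreducible_poly_family k : exists G : nat -> {poly 'F_2}, forall j, (j < k.-1)%N ->
  [/\ irreducible_poly (G j), G j \is monic & size (G j) = (k - j)%N].
Proof.
have irr (j : 'I_k) : exists g : {poly 'F_2}, (j < k.-1)%N ->
    [/\ irreducible_poly g, g \is monic & size g = (k - j)%N].
  have [jk|kj] := ltnP j k.-1; last by exists 0.
  have [|g [gI gM gS]] := @exists_irreducible_poly 2 (k.-1 - j) isT; first by rewrite subn_gt0.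
  by exists g => _; split => //; rewrite gS; lia.
have [Gk HGk] := fin_all_exists irr.
exists (fun j => if insub j is Some i then Gk i else 0) => j jk.
have jk' : (j < k)%N by lia.
by rewrite insubT; apply: HGk.
Qed.

Section PolyMulRow.

Variables (R : fieldType) (k : nat) (g : {poly R}).

Lemma size_rVpoly n (h : 'rV[R]_n) : (size (rVpoly h) <= n)%N.
Proof. exact: size_poly. Qed.

(* Rows of length k are read as polynomials of degree < k, so the image of polymul_rV on
   rows of length n is the space of multiples of g when size g + n = k + 1. *)
Definition polymul_rV n (h : 'rV[R]_n) : 'rV[R]_k := poly_rV (g * rVpoly h).

Lemma polymul_rVK n (h : 'rV_n) :
  (size g + n <= k.+1)%N -> rVpoly (polymul_rV h) = g * rVpoly h.
Proof.
move=> sz; rewrite poly_rV_K // (leq_trans (size_mul_leq _ _)) //.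
by have := size_rVpoly h; lia.
Qed.

Lemma polymul_rVD n (h1 h2 : 'rV_n) :
  polymul_rV (h1 + h2) = polymul_rV h1 + polymul_rV h2.
Proof. by rewrite /polymul_rV raddfD mulrDr raddfD. Qed.

Hypothesis g_neq0 : g != 0.

Lemma polymul_rV_inj n : (size g + n <= k.+1)%N -> injective (@polymul_rV n).
Proof.
move=> sz h1 h2 /(congr1 rVpoly); rewrite !polymul_rVK // => /(mulfI g_neq0) E.
by rewrite -(rVpolyK h1) E rVpolyK.
Qed.

Lemma dvdp_rVpolyP n (v : 'rV_k) : (size g + n = k.+1)%N ->
  reflect (exists h : 'rV_n, v = polymul_rV h) (g %| rVpoly v).
Proof.
move=> sz; apply: (iffP idP) => [/dvdpP[q Eq]|[h ->]]; last first.
  by rewrite polymul_rVK ?sz // dvdp_mulIl.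
exists (poly_rV q); rewrite /polymul_rV poly_rV_K; first by rewrite mulrC -Eq rVpolyK.
have [->|q0] := eqVneq q 0; first by rewrite size_poly0.
have := size_rVpoly v; rewrite Eq size_mul //; move: sz; have := g_neq0.
by rewrite -size_poly_gt0; move: (size g) (size q) => a b; lia.
Qed.

End PolyMulRow.

Lemma card_dvdp_rV (F : finFieldType) k (g : {poly F}) n (P : pred 'rV[F]_k) :
  g != 0 -> (size g + n = k.+1)%N ->
  #|[set v : 'rV_k | (g %| rVpoly v) && P v]| = #|[set h : 'rV_n | P (polymul_rV k g h)]|.
Proof.
move=> g0 sz; rewrite -(card_imset _ (polymul_rV_inj g0 (eq_leq sz))).
apply: eq_card => v; rewrite !inE.
apply/andP/imsetP => [[/(dvdp_rVpolyP g0 _ sz)[h ->] Pv]|[h]].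
  by exists h; rewrite ?inE.
by rewrite inE => Ph ->; split=> //; apply/(dvdp_rVpolyP g0 _ sz); exists h.
Qed.

(** * The anticode construction *)

Section Anticode.

Variables (k s : nat) (G : nat -> {poly 'F_2}) (J : pred nat).

Definition anticode_mult (v : 'rV['F_2]_k) : nat :=
  (\sum_(j < k) (J j && (G j %| rVpoly v)%R))%N.

(* Truncated subtraction: the multiplicity is s - anticode_mult v once mult_leq holds. *)
Definition col_mult (v : 'rV['F_2]_k) : nat :=
  if v == 0 then 0 else (s - anticode_mult v)%N.

Definition anticode_cols : seq 'rV['F_2]_k :=
  flatten [seq nseq (col_mult v) v | v <- enum 'rV['F_2]_k].

Definition nonorth j (x : 'rV['F_2]_k) : bool :=
  [exists h : 'rV_j.+1, dotF2 x (polymul_rV k (G j) h) != 0].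

Lemma anticode_mult_leq (v : 'rV['F_2]_k) :
  (4 <= k)%N -> copies_suffice k s ->
  (forall j, (j < k)%N -> J j -> (2 <= j <= k - 2)%N) ->
  (forall j, (j < k)%N -> J j -> irreducible_poly (G j) /\ size (G j) = (k - j)%N) ->
  v != 0 -> (anticode_mult v <= s)%N.
Proof.
move=> k4 ks HJ HG v0; rewrite leqNgt; apply/negP => Hs.
pose P j := J j && (G j %| rVpoly v).
have HP j : (j < k)%N -> P j -> (2 <= j <= k - 2)%N by move=> jk /andP[/(HJ _ jk)].
have HGP (j : 'I_k) : P j -> irreducible_poly (G j) /\ size (G j) = (k - j)%N.
  by case/andP=> /(HG _ (ltn_ord j)).
have Hd : \prod_(j < k | P j) G j %| rVpoly v.
  rewrite -big_filter; apply: dvdp_prod_coprime.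
  - by rewrite filter_uniq // index_enum_uniq.
  - by move=> i; rewrite mem_filter => /andP[/andP[]].
  - move=> i j; rewrite !mem_filter => /andP[/HGP[Ii si] _] /andP[/HGP[Ij sj] _] ij.
    apply: irredp_coprimep => //; rewrite si sj; apply: contra ij => /eqP E.
    by apply/eqP/ord_inj; have := ltn_ord i; have := ltn_ord j; lia.
have pv0 : rVpoly v != 0 by apply: contra v0 => /eqP pv; rewrite -[v]rVpolyK pv linear0.
have := dvdp_leq pv0 Hd; rewrite size_prod => [|j /HGP[/irredp_neq0]] //.
have -> : #|(fun j : 'I_k => P j)| = (\sum_(j < k) P j)%N.
  by rewrite -sum1_card big_mkcond; apply: eq_bigr => j _; rewrite unfold_in.
rewrite big_mkcond (eq_bigr (fun j : 'I_k => P j * (k - j))%N) => [|j _]; last first.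
  by case: ifP => [/HGP[_ ->]|]; rewrite ?mul1n.
have -> : (\sum_(j < k) P j * (k - j) = \sum_(j < k) P j * (k.-1 - j) + \sum_(j < k) P j)%N.
  rewrite -big_split; apply: eq_bigr => j _.
  by have := ltn_ord j; case: (P j) => /=; lia.
have := copies_suffice_codim_sum k4 ks HP Hs; have := size_rVpoly v.
by move: (size _) (\sum_(j < k) _)%N (\sum_(j < k) _)%N => a b c; lia.
Qed.

Lemma card_nonorth j (x : 'rV['F_2]_k) :
  #|[set h : 'rV_j.+1 | dotF2 x (polymul_rV k (G j) h) != 0]| = (nonorth j x * 2 ^ j)%N.
Proof.
rewrite /nonorth; case: existsP => [[h0 xh0]|none]; last first.
  rewrite mul0n; apply/eqP; rewrite cards_eq0; apply/eqP/setP => h; rewrite !inE.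
  by apply/negbTE/negP => xh; apply: none; exists h.
have fD : {morph (fun h : 'rV_j.+1 => dotF2 x (polymul_rV k (G j) h)) : a b / a + b}.
  by move=> a b /=; rewrite polymul_rVD dotF2D.
have := card_F2_neq0 fD xh0; rewrite card_mx card_Fp // mul1n expnS mul2n.
by move/double_inj ->; rewrite mul1n.
Qed.

Lemma nonorth_delta_last j (i : 'I_k) :
  i = k.-1 :> nat -> G j \is monic -> size (G j) = (k - j)%N -> nonorth j (delta_mx 0 i).
Proof.
move=> Ei mG sG; apply/existsP; exists (poly_rV 'X^j).
rewrite dotF2_deltal /polymul_rV poly_rV_K ?size_polyXn // mxE coefMXn.
have jk : (j < k)%N by rewrite -subn_gt0 -sG size_poly_gt0 monic_neq0.
have ji : (j <= i)%N by rewrite Ei -ltnS prednK //; lia.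
rewrite ltnNge ji /= (_ : (i - j)%N = (size (G j)).-1); last by rewrite sG; lia.
by rewrite -lead_coefE (monicP mG) oner_eq0.
Qed.

Hypotheses (G_neq0 : forall j, (j < k)%N -> J j -> G j != 0)
           (size_G : forall j, (j < k)%N -> J j -> size (G j) = (k - j)%N).

Lemma sum_anticode_mult (P : pred 'rV['F_2]_k) :
  (\sum_v anticode_mult v * P v
   = \sum_(j < k) J j * #|[set h : 'rV_j.+1 | P (polymul_rV k (G j) h)]|)%N.
Proof.
under eq_bigr do rewrite /anticode_mult big_distrl /=.
rewrite exchange_big; apply: eq_bigr => j _ /=.
case Jj: (J j); last by rewrite big1.
have sz : (size (G j) + j.+1 = k.+1)%N by rewrite size_G //; have := ltn_ord j; lia.
rewrite mul1n -(card_dvdp_rV _ (G_neq0 (ltn_ord j) Jj) sz) -sum1_card [RHS]big_mkcond.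
by apply: eq_bigr => v _; rewrite inE; case: (_ %| _)%R; case: (P v).
Qed.

Hypothesis mult_leq : forall v, v != 0 -> (anticode_mult v <= s)%N.

Lemma sum_col_mult (P : pred 'rV['F_2]_k) :
  (\sum_v col_mult v * P v + \sum_v anticode_mult v * P v
   = s * #|[set v | (v != 0%R) && P v]| + anticode_mult 0%R * P 0%R)%N.
Proof.
rewrite -big_split (bigD1 0) //= /col_mult eqxx addnC; congr (_ + _)%N.
rewrite -sum1_card big_distrr big_mkcond [RHS]big_mkcond /=; apply: eq_bigr => v _; rewrite inE.
have [//|v0 /=] := eqVneq v 0; rewrite muln1.
by have := mult_leq v0; case: (P v) => /=; lia.
Qed.

Lemma count_anticode_cols (P : pred 'rV['F_2]_k) :
  count P anticode_cols = (\sum_v col_mult v * P v)%N.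
Proof.
rewrite count_flatten -map_comp sumnE big_map big_enum /=.
by apply: eq_bigr => v _; rewrite count_nseq mulnC.
Qed.

Lemma size_anticode_cols :
  (size anticode_cols + \sum_(j < k) J j * 2 ^ j.+1 = s * (2 ^ k).-1 + \sum_(j < k) J j)%N.
Proof.
have card_all j : #|[set _ : 'rV['F_2]_j.+1 | true]| = (2 ^ j.+1)%N.
  by rewrite (_ : [set _ | _] = setT) ?cardsT ?card_mx ?card_Fp ?mul1n //; apply/setP.
have card_nz : #|[set v : 'rV['F_2]_k | (v != 0) && predT v]| = (2 ^ k).-1.
  rewrite (_ : [set v | _] = [set~ 0]) ?cardsC1 ?card_mx ?card_Fp ?mul1n //.
  by apply/setP => v; rewrite !inE andbT.
have mult0 : anticode_mult 0 = (\sum_(j < k) J j)%N.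
  by apply: eq_bigr => j _; rewrite linear0 dvdp0 andbT.
rewrite -(count_predT anticode_cols) count_anticode_cols.
have := sum_col_mult predT; rewrite sum_anticode_mult mult0 card_nz /= muln1 => <-.
by congr (_ + _)%N; apply: eq_bigr => j _; rewrite card_all.
Qed.

Lemma cols_wt_anticode x : x != 0 ->
  (cols_wt anticode_cols x + \sum_(j < k) J j * nonorth j x * 2 ^ j = s * 2 ^ k.-1)%N.
Proof.
move=> x0; rewrite /cols_wt count_anticode_cols -(card_dotF2_neq0 x0).
have -> : [set v | dotF2 x v != 0] = [set v | (v != 0) && (dotF2 x v != 0)].
  by apply/setP => v; rewrite !inE; have [->|] := eqVneq v 0; rewrite ?dotF2r0 ?eqxx.
have := sum_col_mult (fun v => dotF2 x v != 0).
rewrite sum_anticode_mult dotF2r0 eqxx muln0 addn0 => <-.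
by congr (_ + _)%N; apply: eq_bigr => j _; rewrite card_nonorth mulnA.
Qed.

Lemma cols_wt_anticode_geq x : x != 0 ->
  (s * 2 ^ k.-1 - \sum_(j < k) J j * 2 ^ j <= cols_wt anticode_cols x)%N.
Proof.
move/cols_wt_anticode <-; rewrite leq_subLR addnC leq_add2r.
by apply: leq_sum => j _; case: (J j); case: (nonorth j x).
Qed.

Lemma dvdn_cols_wt_anticode x :
  (forall j, (j < k)%N -> J j -> (2 <= j)%N) -> (4 %| s * 2 ^ k.-1)%N -> x != 0 ->
  (4 %| cols_wt anticode_cols x)%N.
Proof.
move=> J2 k4 /cols_wt_anticode wtE; rewrite -wtE dvdn_addl // in k4.
apply: dvdn_sum => j _; case Jj: (J j); rewrite ?mul0n ?dvdn0 // mulnC dvdn_mulr //.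
by rewrite (dvdn_exp2l 2 (J2 _ (ltn_ord j) Jj)).
Qed.

Lemma cols_wt_anticode_attained :
  (0 < k)%N -> (forall j, (j < k)%N -> J j -> G j \is monic) ->
  exists2 x, x != 0 & cols_wt anticode_cols x = (s * 2 ^ k.-1 - \sum_(j < k) J j * 2 ^ j)%N.
Proof.
move=> k0 mG; have ik : (k.-1 < k)%N by rewrite prednK.
have x0 : delta_mx 0 (Ordinal ik) != 0 :> 'rV['F_2]_k by apply: delta_mx_neq0.
exists (delta_mx 0 (Ordinal ik)) => //; rewrite -(cols_wt_anticode x0).
suff -> : (\sum_(j < k) J j * 2 ^ j
           = \sum_(j < k) J j * nonorth j (delta_mx 0%R (Ordinal ik)) * 2 ^ j)%N.
  by rewrite addnK.
by apply: eq_bigr => j _; case Jj: (J j); rewrite // nonorth_delta_last ?mG ?size_G.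
Qed.

End Anticode.

Lemma self_orthogonal_griesmer_code k s d :
  (4 <= k)%N -> (4 %| d)%N -> (d < 2 ^ k.-1)%N -> (d < s * 2 ^ k.-1)%N ->
  ((0 < d)%N -> copies_suffice k s) ->
  exists C : 'M['F_2]_(griesmer_length k (s * 2 ^ k.-1 - d)%N),
    is_binary_code k (s * 2 ^ k.-1 - d)%N C /\ self_orthogonal C.
Proof.
move=> k4 d4 dk ds ks; have [G HG0] := irreducible_poly_family k.
have HG j : (j < k)%N -> bitn d j ->
    [/\ irreducible_poly (G j), G j \is monic & size (G j) = (k - j)%N].
  by move=> jk /(bitn_mid d4 dk) j2; apply: HG0; lia.
have G_neq0 j : (j < k)%N -> bitn d j -> G j != 0 by move=> jk /(HG _ jk)[/irredp_neq0].
have size_G j : (j < k)%N -> bitn d j -> size (G j) = (k - j)%N by move=> jk /(HG _ jk)[].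
have mult_leq (v : 'rV['F_2]_k) : v != 0 -> (anticode_mult G (bitn d) v <= s)%N.
  have [d0|d0] := posnP d; last first.
    apply: anticode_mult_leq => // [|j _|j jk /(HG _ jk)[]] //.
    + exact: ks.
    + exact: bitn_mid.
  by rewrite /anticode_mult big1 // => j _; rewrite d0 /bitn div0n.
have dk' : (d < 2 ^ k)%N by rewrite (leq_trans dk) // leq_pexp2l // leq_pred.
have dE : (\sum_(j < k) bitn d j * 2 ^ j)%N = d by apply: sum_bitn.
apply: (self_orthogonal_code_of_columns (cs := anticode_cols k s G (bitn d))).
- have := size_anticode_cols G_neq0 size_G mult_leq.
  by have := griesmer_length_anticode (_ : 0 < k)%N ds dk'; lia.
- by rewrite subn_gt0.
- by move=> x /(cols_wt_anticode_geq G_neq0 size_G mult_leq); rewrite dE.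
- move=> x; apply: (dvdn_cols_wt_anticode G_neq0 size_G mult_leq).
    by move=> j _ /(bitn_mid d4 dk)/andP[].
  by rewrite dvdn_mull // (dvdn_exp2l 2 (_ : 2 <= k.-1)%N); lia.
- have [||x x0 wtx] := cols_wt_anticode_attained G_neq0 size_G mult_leq.
  + by lia.
  + by move=> j jk /(HG _ jk)[].
  by exists x; rewrite // wtx dE.
Qed.

Unset Implicit Arguments.
Set Strict Implicit.

Theorem theorem4p8 (R : realType) (k : nat) (m : int) (D : nat) :
  (4 <= k)%N ->
  (m >= Num.min
          (Num.ceil (((k%:R + 2) * (k%:R - 3)) / (2 * k%:R) : R))
          (Num.ceil (Num.sqrt (2 * k%:R + 1 / 4) - 3 / 2 : R)) - 1)%R ->
  (0 < D)%N -> (4 %| D)%N ->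
  (m * (2 ^ k.-1)%:Z <= D%:Z)%R ->
  exists C : 'M['F_2]_(griesmer_length k D),
    is_binary_code k D C /\ self_orthogonal C.
Proof.
move=> k4 Hm D0 D4 HmD.
pose P := (2 ^ k.-1)%N; pose s := ceil_div D P.
have P0 : (0 < P)%N by rewrite expn_gt0.
have P4 : (4 %| P)%N by rewrite (dvdn_exp2l 2 (_ : 2 <= k.-1)%N); lia.
have /andP[DsP sPD] := ceil_divP D P0.
have -> : D = (s * P - (s * P - D))%N by lia.
apply: self_orthogonal_griesmer_code => //; first by rewrite dvdn_sub ?dvdn_mull.
- by rewrite ltn_subLR //; lia.
- by lia.
move=> d0; apply: (copies_suffice_of_ceil k4 Hm).
rewrite -(ltr_pM2r (_ : 0 < P%:Z)) ?ltz_nat // (le_lt_trans HmD) // -PoszM ltz_nat.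
lia.
Qed.
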